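(* Let $n\ge 3$ and let $m,a,b,c$ be integers with $m\ge 0$, $a\ge1$, $b\ge 1$, $c\ge 1$ and $a+b+c=n$. Put $$W=(s_{a+b}s_{a+b-1}\cdots s_2)\,(s_1s_2\cdots s_n)\,(s_{n-1}s_{n-2}\cdots s_{a+b+1}).$$ Then $$(m^a,(m+1)^b,m^c)=(s_{a+1}s_{a+2}\cdots s_{a+b-1})\,W^m(\alpha_{a+b}).$$ In particular $(m^a,(m+1)^b,m^c)$ is a positive real root.
   Context: Notation: $(x^a,y^b,z^c)$ denotes the vector in $\mathbb{Z}^n$ whose first $a$ entries equal $x$, next $b$ entries equal $y$ and last $c$ entries equal $z$. The simple roots $\alpha_1,\dots,\alpha_n$ are the standard basis vectors of $\mathbb{Z}^n$. For $1\le i\le n$ the simple reflection $s_i:\mathbb{Z}^n\to\mathbb{Z}^n$ is the linear map which changes only the $i$-th coordinate of $v=(v^1,\dots,v^n)$, replacing $v^i$ by $v^{i-1}+v^{i+1}-v^i$, with indices modulo $n$ in $\{1,\dots,n\}$. Products are compositions of maps (the rightmost factor acts first). Convention: an ascending product $s_js_{j+1}\cdots s_l$ with $l<j$ and a descending product $s_ls_{l-1}\cdots s_j$ with $l<j$ are both the identity map. A real root is a vector $s_{i_1}\cdots s_{i_j}(\alpha_k)$; it is positive if its entries are nonnegative. *)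

(* Vectors of Z^n are finite functions 'I_n -> int;
   the paper's 1-based coordinate i corresponds to the ordinal i-1. *)
From mathcomp Require Import all_boot all_order all_algebra.
Set Implicit Arguments. Unset Strict Implicit. Unset Printing Implicit Defensive.
Import GRing.Theory Num.Theory.
Local Open Scope ring_scope.

Definition vec (n : nat) := {ffun 'I_n -> int}.

(* 1-based coordinate k of v, with the index taken modulo n in {1,...,n}
   (so coordinate 0 is coordinate n and coordinate n+1 is coordinate 1). *)
Definition vget (n : nat) (v : vec n) (k : nat) : int :=
  match insub ((k + n - 1) %% n)%N with
  | Some j => v j
  | None => 0
  end.

Definition sref (n : nat) (i : nat) (v : vec n) : vec n :=
  [ffun j : 'I_n => if (j.+1 == i)%N
                    then vget v (i - 1) + vget v (i + 1) - v j
                    else v j].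

Definition alpha (n : nat) (k : nat) : vec n :=
  [ffun j : 'I_n => if (j.+1 == k)%N then 1 else 0].

(* ascending product s_j s_{j+1} ... s_l (identity if l < j);
   rightmost factor acts first *)
Definition asc (n : nat) (j l : nat) (v : vec n) : vec n :=
  foldr (@sref n) v (iota j (l.+1 - j)).

Definition desc (n : nat) (l j : nat) (v : vec n) : vec n :=
  foldr (@sref n) v (rev (iota j (l.+1 - j))).

Definition Wmap (n a b : nat) (v : vec n) : vec n :=
  desc (a + b) 2 (asc 1 n (desc n.-1 (a + b + 1) v)).

Definition blockvec (n a b : nat) (x y z : int) : vec n :=
  [ffun j : 'I_n => if (j < a)%N then x else if (j < a + b)%N then y else z].

Definition real_root (n : nat) (v : vec n) : Prop :=
  exists (l : seq nat) (k : nat),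
    [/\ all (fun i => (1 <= i <= n)%N) l, (1 <= k <= n)%N &
        v = foldr (@sref n) (alpha n k) l].

Definition positive_vec (n : nat) (v : vec n) : Prop := forall j, 0 <= v j.

(* Every vector met while computing W^m(alpha_{a+b}) is a "plateau": all
   coordinates equal some m except those in a set P, which equal m+1.
   A run of interior reflections s_j, ..., s_l over a flat stretch copies
   the value just before the stretch (descending product) or just after it
   (ascending product) into the whole run.  Tracking the plateau through the
   three products shows that W maps the plateau (m, {a+b}) to (m+1, {a+b});
   the final product s_{a+1} ... s_{a+b-1} then spreads the value m+1 from
   a+b down to a+1.  Every vector involved is a product of simple
   reflections applied to alpha_{a+b}, hence a real root. *)
From mathcomp Require Import all_boot all_order all_algebra zify.
Set Implicit Arguments. Unset Strict Implicit. Unset Printing Implicit Defensive.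
Local Open Scope ring_scope.

Definition agrees (n : nat) (v : vec n) (f : nat -> int) : Prop :=
  forall j : 'I_n, v j = f j.+1.

Definition plateau (m : nat) (P : pred nat) (k : nat) : int :=
  if P k then m.+1%:Z else m%:Z.

Definition wrap (n k : nat) : nat := ((k + n - 1) %% n).+1.

Ltac nat_cases := rewrite ?/plateau /=; repeat match goal with
  | |- context [(?x == ?y)] => case: (@eqP nat x y) => ?
  | |- context [(?x <= ?y)%N] => case: (leqP x y) => ?
  end; rewrite /=; try lia.

Lemma agrees_ext n (v : vec n) f g : agrees v f ->
  (forall k, (1 <= k <= n)%N -> f k = g k) -> agrees v g.
Proof. by move=> H E j; rewrite H E // ltn_ord. Qed.

Lemma agrees_eq n (v w : vec n) f : agrees v f -> agrees w f -> v = w.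
Proof. by move=> Hv Hw; apply/ffunP => j; rewrite Hv Hw. Qed.

Lemma wrap_id n k : (1 <= k <= n)%N -> wrap n k = k.
Proof.
move=> hk; rewrite /wrap (_ : k + n - 1 = k.-1 + n)%N; last by lia.
by rewrite modnDr modn_small; lia.
Qed.

Lemma wrap0 n : (0 < n)%N -> wrap n 0 = n.
Proof. by move=> n0; rewrite /wrap add0n modn_small; lia. Qed.

Lemma wrapSn n : wrap n n.+1 = 1%N.
Proof. by rewrite /wrap (_ : n.+1 + n - 1 = 0 + n + n)%N ?modnDr ?mod0n //; lia. Qed.

Lemma vget_agrees n (v : vec n) f k : (0 < n)%N -> agrees v f ->
  vget v k = f (wrap n k).
Proof.
move=> n0 H; rewrite /vget /wrap; case: insubP => [j _ <-|]; first exact: H.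
by rewrite ltn_pmod.
Qed.

Lemma agrees_sref n i (v : vec n) f : (1 <= i <= n)%N -> agrees v f ->
  agrees (sref i v) (fun k =>
    if k == i then f (wrap n i.-1) + f (wrap n i.+1) - f i else f k).
Proof.
move=> hi H j; rewrite ffunE; case: eqP => [ji|_]; last exact: H.
rewrite !(vget_agrees _ _ H) ?H -?ji ?eqxx ?subn1 ?addn1 //; lia.
Qed.

Lemma agrees_sref_inner n i (v : vec n) f : (2 <= i < n)%N -> agrees v f ->
  agrees (sref i v) (fun k => if k == i then f i.-1 + f i.+1 - f i else f k).
Proof.
move=> hi H; apply: agrees_ext (agrees_sref _ H) _ => [|k _]; first lia.
by rewrite !wrap_id //; lia.
Qed.

Section Products.
Variable n : nat.
Implicit Types v : vec n.

Lemma asc_nil j l v : (l < j)%N -> asc j l v = v.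
Proof. by move=> lj; rewrite /asc (_ : l.+1 - j = 0)%N //; lia. Qed.

Lemma ascS j l v : (j <= l)%N -> asc j l v = sref j (asc j.+1 l v).
Proof. by move=> jl; rewrite /asc subSS subSn. Qed.

Lemma asc_split j k l v : (0 < j <= k)%N -> (k <= l.+1)%N ->
  asc j l v = asc j k.-1 (asc k l v).
Proof.
move=> jk kl; rewrite /asc -foldr_cat.
rewrite (_ : l.+1 - j = k.-1.+1 - j + (l.+1 - k))%N ?iotaD; last by lia.
by rewrite (_ : j + (k.-1.+1 - j) = k)%N //; lia.
Qed.

Lemma desc_nil l j v : (l < j)%N -> desc l j v = v.
Proof. by move=> lj; rewrite /desc (_ : l.+1 - j = 0)%N //; lia. Qed.

Lemma descS l j v : (0 < j <= l)%N -> desc l j v = sref l (desc l.-1 j v).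
Proof.
move=> jl; rewrite /desc (_ : l.+1 - j = (l.-1.+1 - j) + 1)%N; last by lia.
by rewrite iotaD rev_cat /= (_ : j + (l.-1.+1 - j) = l)%N //; lia.
Qed.

Lemma agrees_desc_spread l j v f : (2 <= j)%N -> (l < n)%N ->
  (forall i, (j <= i <= l)%N -> f i = f i.+1) -> agrees v f ->
  agrees (desc l j v) (fun k => if (j <= k <= l)%N then f j.-1 else f k).
Proof.
move=> hj; elim: l => [|l IH] hl hf H.
  by rewrite desc_nil; [apply: agrees_ext H _ => k _; nat_cases | lia].
have [lj|jl] := ltnP l.+1 j.
  by rewrite desc_nil //; apply: agrees_ext H _ => k _; nat_cases.
rewrite descS /=; last by lia.
have IHl : agrees (desc l j v) (fun k => if (j <= k <= l)%N then f j.-1 else f k).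
  by apply: IH H; [lia | move=> i hi; apply: hf; lia].
apply: agrees_ext (agrees_sref_inner _ IHl) _; first by lia.
move=> k _; case: eqP => [->|kl]; last by nat_cases.
have E : f l.+1 = f l.+2 by apply: hf; lia.
have [jl'|lj'] := leqP j l; first by nat_cases.
by rewrite (_ : j = l.+1); [nat_cases | lia].
Qed.

Lemma agrees_asc_spread j l v f : (2 <= j)%N -> (l < n)%N ->
  (forall i, (j <= i <= l)%N -> f i.-1 = f i) -> agrees v f ->
  agrees (asc j l v) (fun k => if (j <= k <= l)%N then f l.+1 else f k).
Proof.
move=> + hl hf H; move Hd: (l.+1 - j)%N => d; elim: d j Hd hf => [|d IH] j Hd hf hj.
  by rewrite asc_nil; [apply: agrees_ext H _ => k _; nat_cases | lia].
rewrite ascS; last by lia.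
have IHj : agrees (asc j.+1 l v) (fun k => if (j.+1 <= k <= l)%N then f l.+1 else f k).
  by apply: IH; [lia | move=> i hi; apply: hf; lia | lia].
apply: agrees_ext (agrees_sref_inner _ IHj) _; first by lia.
move=> k _; case: eqP => [->|kj]; last by nat_cases.
have E : f j.-1 = f j by apply: hf; lia.
have [jl'|lj'] := ltnP j l; first by nat_cases.
by rewrite (_ : l = j); [nat_cases | lia].
Qed.

End Products.

Section Walk.
Variables n a b : nat.
Hypotheses (ha : (1 <= a)%N) (hb : (1 <= b)%N) (hab : (a + b < n)%N).
Let p := (a + b)%N.

Fact p_range : (2 <= p < n)%N.
Proof. by rewrite /p; lia. Qed.

Lemma asc_1n (v : vec n) :
  asc 1 n v = sref 1 (asc 2 p.-1 (sref p (asc p.+1 n.-1 (sref n v)))).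
Proof.
have hp := p_range.
rewrite (ascS (j := 1)); last lia.
rewrite (asc_split (j := 2) (k := p)); try lia.
rewrite (ascS (j := p)); last lia.
rewrite (asc_split (j := p.+1) (k := n)); try lia.
by rewrite (ascS (j := n)) ?(asc_nil (j := n.+1)).
Qed.

Lemma agrees_desc_tail m (v : vec n) : agrees v (plateau m (pred1 p)) ->
  agrees (desc n.-1 p.+1 v) (plateau m (fun k => p <= k <= n.-1)%N).
Proof.
move=> H; have hp := p_range.
apply: agrees_ext (agrees_desc_spread _ _ _ H) _ => [|||k hk]; try lia.
  by move=> i hi; nat_cases.
by nat_cases.
Qed.

Lemma agrees_asc_1n m (v : vec n) :
  agrees v (plateau m (fun k => p <= k <= n.-1)%N) ->
  agrees (asc 1 n v) (plateau m (fun k => (k == 1) || (p < k))%N).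
Proof.
move=> H; have hp := p_range; rewrite asc_1n.
have Hn : agrees (sref n v) (plateau m (fun k => p <= k)%N).
  apply: agrees_ext (agrees_sref _ H) _ => [|k hk]; first lia.
  by rewrite wrapSn wrap_id; nat_cases.
have Hgt : agrees (asc p.+1 n.-1 (sref n v)) (plateau m (fun k => p <= k)%N).
  apply: agrees_ext (agrees_asc_spread _ _ _ Hn) _ => [|||k hk]; try lia.
    by move=> i hi; nat_cases.
  by nat_cases.
have Hp : agrees (sref p (asc p.+1 n.-1 (sref n v))) (plateau m (fun k => p < k)%N).
  apply: agrees_ext (agrees_sref_inner _ Hgt) _ => [|k hk]; first lia.
  by nat_cases.
set w := sref p _ in Hp *.
have Hlt : agrees (asc 2 p.-1 w) (plateau m (fun k => p < k)%N).
  apply: agrees_ext (agrees_asc_spread _ _ _ Hp) _ => [|||k hk]; try lia.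
    by move=> i hi; nat_cases.
  by nat_cases.
apply: agrees_ext (agrees_sref _ Hlt) _ => [|k hk]; first lia.
by rewrite wrap0 ?wrap_id; nat_cases.
Qed.

Lemma agrees_desc_head m (v : vec n) :
  agrees v (plateau m (fun k => (k == 1) || (p < k))%N) ->
  agrees (desc p 2 v) (plateau m.+1 (pred1 p)).
Proof.
move=> H; have hp := p_range.
have Hne : agrees (desc p.-1 2 v) (plateau m (fun k => (k < p) || (p < k))%N).
  apply: agrees_ext (agrees_desc_spread _ _ _ H) _ => [|||k hk]; try lia.
    by move=> i hi; nat_cases.
  by nat_cases.
rewrite (descS (l := p)); last lia.
apply: agrees_ext (agrees_sref_inner _ Hne) _ => [|k hk]; first lia.
by nat_cases.
Qed.

Lemma agrees_Wmap m (v : vec n) :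
  agrees v (plateau m (pred1 p)) -> agrees (Wmap a b v) (plateau m.+1 (pred1 p)).
Proof.
move=> H; rewrite /Wmap -/p addn1.
exact/agrees_desc_head/agrees_asc_1n/agrees_desc_tail.
Qed.

Lemma agrees_iter_Wmap m :
  agrees (iter m (Wmap a b) (alpha n p)) (plateau m (pred1 p)).
Proof.
elim: m => [|m IH] /=; last exact: agrees_Wmap IH.
by move=> j; rewrite ffunE; nat_cases.
Qed.

End Walk.

Definition reflection_word (n : nat) (F : vec n -> vec n) : Prop :=
  exists2 w : seq nat, all (fun i => 1 <= i <= n)%N w &
    forall v, F v = foldr (@sref n) v w.

Section Words.
Variable n : nat.
Implicit Types F G : vec n -> vec n.

Lemma reflection_word_comp F G : reflection_word F -> reflection_word G ->
  reflection_word (fun v => F (G v)).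
Proof.
move=> [wF hF EF] [wG hG EG]; exists (wF ++ wG); first by rewrite all_cat hF.
by move=> v; rewrite EF EG foldr_cat.
Qed.

Lemma reflection_word_iter F k : reflection_word F -> reflection_word (iter k F).
Proof.
move=> hF; elim: k => [|k IH]; first by exists [::].
exact: reflection_word_comp hF IH.
Qed.

Lemma reflection_word_asc j l : (0 < j)%N -> (l <= n)%N -> reflection_word (@asc n j l).
Proof.
move=> hj hl; exists (iota j (l.+1 - j)) => // .
by apply/allP => i; rewrite mem_iota; lia.
Qed.

Lemma reflection_word_desc l j : (0 < j)%N -> (l <= n)%N -> reflection_word (@desc n l j).
Proof.
move=> hj hl; exists (rev (iota j (l.+1 - j))) => //.
by rewrite all_rev; apply/allP => i; rewrite mem_iota; lia.
Qed.

Lemma reflection_word_Wmap a b : (a + b <= n)%N -> reflection_word (@Wmap n a b).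
Proof.
move=> hab; apply: reflection_word_comp; first exact: reflection_word_desc.
apply: reflection_word_comp; first exact: reflection_word_asc.
by apply: reflection_word_desc; lia.
Qed.

End Words.

Theorem theorem3p1 (n m a b c : nat) :
  (3 <= n)%N -> (1 <= a)%N -> (1 <= b)%N -> (1 <= c)%N -> (a + b + c = n)%N ->
  blockvec n a b (m%:Z) (m.+1%:Z) (m%:Z)
    = asc (a + 1) (a + b - 1) (iter m (Wmap a b) (alpha n (a + b)))
  /\ real_root (blockvec n a b (m%:Z) (m.+1%:Z) (m%:Z))
  /\ positive_vec (blockvec n a b (m%:Z) (m.+1%:Z) (m%:Z)).
Proof.
move=> _ ha hb hc habc; have hab : (a + b < n)%N by lia.
have E : blockvec n a b (m%:Z) (m.+1%:Z) (m%:Z)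
    = asc (a + 1) (a + b - 1) (iter m (Wmap a b) (alpha n (a + b))).
  apply: (@agrees_eq _ _ _ (plateau m (fun k => a < k <= a + b)%N)).
    by move=> j; rewrite ffunE; nat_cases.
  apply: agrees_ext (agrees_asc_spread _ _ _ (agrees_iter_Wmap ha hb hab m)) _;
    try lia; by [move=> i hi; nat_cases | move=> k hk; nat_cases].
split=> //; split; last by move=> j; rewrite ffunE; nat_cases.
have hW : reflection_word
    (fun v : vec n => asc (a + 1) (a + b - 1) (iter m (Wmap a b) v))%N.
  apply: reflection_word_comp.
    by apply: reflection_word_asc; lia.
  by apply/reflection_word_iter/reflection_word_Wmap; lia.
have [w hw Ew] := hW.
by exists w, (a + b)%N; split; [| lia | rewrite E Ew].
Qed.
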